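(* Let $w_1,w_2,\ldots$ be i.i.d. random variables from a distribution $\mathbb{P}_w\in\mathcal{D}_1\cup\mathcal{D}_2$. Then $\lim_{n\to\infty}\mathbb{P}\bigl(\sum_{i=1}^n w_i^2\ge\frac{1}{2}n\bigr)=1$.
   Context: For $s>0$, $\mathcal{D}_s$ is the class of distributions of $\xi$ with $\mathbb{E}[\xi]=0$ and $1\le\mathbb{E}[|\xi|^s]\le2$. *)

From HB Require Import structures.
From mathcomp Require Import all_boot all_order all_algebra.
From mathcomp Require Import all_classical all_reals all_analysis.
Set Implicit Arguments. Unset Strict Implicit. Unset Printing Implicit Defensive.
Import Order.TTheory GRing.Theory Num.Theory.
Local Open Scope classical_set_scope.
Local Open Scope ring_scope.

Definition mutually_independent d (T : measurableType d) (R : realType)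
    (P : probability T R) (w : nat -> {RV P >-> R}) : Prop :=
  forall (s : seq nat) (B : nat -> set R),
    uniq s -> (forall i, measurable (B i)) ->
    P (\bigcap_(i in [set` s]) (w i @^-1` B i)) =
    (\prod_(i <- s) P (w i @^-1` B i))%E.

Definition identically_distributed d (T : measurableType d) (R : realType)
    (P : probability T R) (w : nat -> {RV P >-> R}) : Prop :=
  forall i (B : set R), measurable B -> P (w i @^-1` B) = P (w 0 @^-1` B).

Definition in_D d (T : measurableType d) (R : realType)
    (P : probability T R) (s : R) (X : {RV P >-> R}) : Prop :=
  P.-integrable setT (EFin \o X) /\ ('E_P[X] = 0)%E /\
  (1%E <= \int[P]_x ((`|X x| `^ s)%:E) <= 2%E)%E.

From HB Require Import structures.
From mathcomp Require Import all_boot all_order all_algebra.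
From mathcomp Require Import all_classical all_reals all_analysis.
From mathcomp Require Import measurable_realfun.
From mathcomp.algebra_tactics Require Import ring lra.
Set Implicit Arguments.
Unset Strict Implicit.
Unset Printing Implicit Defensive.
Import Order.TTheory GRing.Theory Num.Theory.
Local Open Scope classical_set_scope.
Import numFieldNormedType.Exports.
Local Open Scope ring_scope.

(* Let g be the staircase y |-> h * #{j < K | (j + 1) h <= y}: it satisfies
   0 <= g <= h K, g(y) <= y and min(y, K h) <= g(y) + h.  Since E[w^2] >= 1
   (in the D_1 case because 2|y| <= y^2 + 1), monotone convergence yields M
   with E[min(w^2, M)] >= 3/4, so for h = 1/8 and K = 8 M the mean
   mu := E[g(w_i^2)] exceeds 1/2.  Each g(w_i^2) is a combination of
   indicators of events w_i^-1(B), so mutual independence of events already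
   gives E[g(w_i^2) g(w_k^2)] = mu^2 for i <> k, and Chebyshev's inequality
   for sum_i g(w_i^2) <= sum_i w_i^2 bounds P(sum_i w_i^2 < n/2) by
   (h K)^2 / ((mu - 1/2)^2 n). *)

Section staircase_function.
Context {R : realType}.
Variable h : R.
Hypothesis h_gt0 : 0 < h.

Definition staircase (K : nat) (y : R) : R :=
  h * \sum_(j < K) ((j.+1)%:R * h <= y)%R%:R.

Lemma staircaseS K y :
  staircase K.+1 y = staircase K y + h * ((K.+1)%:R * h <= y)%R%:R.
Proof. by rewrite /staircase big_ord_recr mulrDr. Qed.

Lemma staircase_ge0 K y : 0 <= staircase K y.
Proof. by apply: mulr_ge0; [exact: ltW | apply: sumr_ge0]. Qed.

Lemma staircase_le_bound K y : staircase K y <= h * K%:R.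
Proof.
apply: ler_wpM2l; first exact: ltW.
rewrite -[X in _ <= X%:R]card_ord -sumr_const.
by apply: ler_sum => j _; rewrite lern1 leq_b1.
Qed.

Lemma staircase_full K y : K%:R * h <= y -> staircase K y = K%:R * h.
Proof.
move=> Khy; rewrite /staircase (eq_bigr (fun=> 1)) ?sumr_const ?card_ord.
  by rewrite mulr_natr mulr_natl.
move=> j _; rewrite (le_trans _ Khy) //.
by rewrite ler_pM2r // ler_nat.
Qed.

Lemma staircase_le K y : 0 <= y -> staircase K y <= y.
Proof.
move=> y0; elim: K => [|K IH]; first by rewrite /staircase big_ord0 mulr0.
have [Khy|yKh] := leP ((K.+1)%:R * h) y; first by rewrite staircase_full.
by rewrite staircaseS (lt_geF yKh) mulr0 addr0.
Qed.

Lemma min_le_staircase K y : Num.min y (K%:R * h) <= staircase K y + h.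
Proof.
have [Khy|] := leP (K%:R * h) y; first by rewrite staircase_full // lerDl ltW.
elim: K => [|K IH] yKh.
  rewrite mul0r in yKh.
  by rewrite /staircase big_ord0 mulr0 add0r ltW ?(lt_trans yKh).
rewrite staircaseS (lt_geF yKh) mulr0 addr0.
have [Khy|/IH //] := leP (K%:R * h) y.
by rewrite staircase_full // ltW // -[X in _ + X]mul1r -mulrDl natr1.
Qed.

End staircase_function.

Section integrals.
Context d (T : measurableType d) (R : realType) (P : probability T R).

Lemma measurable_lt_cst (f : T -> R) (a : R) : measurable_fun setT f ->
  measurable [set x | f x < a].
Proof.
move=> mf; rewrite -[X in measurable X]setTI -preimage_itvNyo.
exact: mf measurableT _ (measurable_itv _).
Qed.

Lemma measurable_ge_cst (f : T -> R) (a : R) : measurable_fun setT f ->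
  measurable [set x | a <= f x].
Proof.
move=> mf; rewrite -[X in measurable X]setTI -preimage_itvcy.
exact: mf measurableT _ (measurable_itv _).
Qed.

Lemma integral_sumr (I : eqType) (r : seq I) (f : I -> T -> R) :
  (forall i, measurable_fun setT (f i)) -> (forall i x, 0 <= f i x) ->
  (\int[P]_x (\sum_(i <- r) f i x)%:E = \sum_(i <- r) \int[P]_x (f i x)%:E)%E.
Proof.
move=> mf f0; under eq_integral do rewrite -sumEFin.
apply: ge0_integral_sum => [|i|i x _] //; first exact/measurable_EFinP.
by rewrite lee_fin.
Qed.

Lemma integral_indicZ (c : R) (B : set T) : 0 <= c -> measurable B ->
  (\int[P]_x (c * \1_B x)%:E = (c * fine (P B))%:E)%E.
Proof.
move=> c0 mB; under eq_integral do rewrite EFinM.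
rewrite ge0_integralZl_EFin //; last exact/measurable_EFinP/measurable_indic.
by rewrite integral_indic // setIT EFinM fineK // fin_num_measure.
Qed.

Lemma sqr_mul_measure_lt_le (f : T -> R) (a c : R) :
  measurable_fun setT f -> a <= c ->
  (((c - a) ^+ 2)%:E * P [set x | f x < a]%R <=
    \int[P]_x ((f x - c) ^+ 2)%:E)%E.
Proof.
move=> mf ac.
have mlt : measurable [set x | f x < a] by exact: measurable_lt_cst.
rewrite -[X in P X]setIT -integral_indic // -ge0_integralZl_EFin ?sqr_ge0 //;
  last exact/measurable_EFinP/measurable_indic.
apply: ge0_le_integral => //.
- by move=> x _; rewrite -EFinM lee_fin indicE mulr_ge0 ?sqr_ge0.
- by apply: measurable_funeM; exact/measurable_EFinP/measurable_indic.
- exact/measurable_EFinP/measurable_funX/measurable_funB.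
move=> x _; rewrite -EFinM lee_fin indicE.
have [/[!inE] /= fxa|_] := boolP (x \in _); last by rewrite mulr0 sqr_ge0.
by rewrite mulr1; nra.
Qed.

Lemma integral_sqr_centered (f : T -> R) (c : R) :
  measurable_fun setT f -> (forall x, 0 <= f x) ->
  (\int[P]_x (f x)%:E = c%:E)%E ->
  (\int[P]_x ((f x - c) ^+ 2)%:E + (c ^+ 2)%:E = \int[P]_x (f x ^+ 2)%:E)%E.
Proof.
move=> mf f0 intf.
have c0 : 0 <= c.
  by rewrite -lee_fin -intf integral_ge0 // => x _; rewrite lee_fin.
have mfc : measurable_fun setT (fun x => (f x - c) ^+ 2).
  by apply/measurable_funX/measurable_funB => //; exact: measurable_cst.
have expand : (\int[P]_x ((f x - c) ^+ 2)%:E + (2 * c * c)%:E =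
               \int[P]_x (f x ^+ 2)%:E + (c ^+ 2)%:E)%E.
  transitivity (\int[P]_x (((f x - c) ^+ 2)%:E + (2 * c)%:E * (f x)%:E))%E.
    rewrite ge0_integralD //.
    - rewrite ge0_integralZl_EFin ?mulr_ge0 //.
      + by rewrite intf -EFinM.
      + by move=> x _; rewrite lee_fin.
      + exact/measurable_EFinP.
    - by move=> x _; rewrite lee_fin sqr_ge0.
    - exact/measurable_EFinP.
    - by move=> x _; rewrite -EFinM lee_fin !mulr_ge0.
    - exact/measurable_funeM/measurable_EFinP.
  transitivity (\int[P]_x ((f x ^+ 2)%:E + (c ^+ 2)%:E))%E.
    by apply: eq_integral => x _; rewrite -EFinM -!EFinD; congr EFin; ring.
  rewrite ge0_integralD //.
  - by rewrite integral_cst //= probability_setT mule1.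
  - by move=> x _; rewrite lee_fin sqr_ge0.
  - exact/measurable_EFinP/measurable_funX.
  - by move=> x _; rewrite lee_fin sqr_ge0.
have -> : (c ^+ 2 = 2 * c * c - c ^+ 2) by ring.
by rewrite EFinB addeA expand addeK.
Qed.

End integrals.

Section staircase_integrals.
Context d (T : measurableType d) (R : realType) (P : probability T R).
Variables (h : R) (K : nat).
Hypothesis h_gt0 : 0 < h.
Let h_ge0 : 0 <= h := ltW h_gt0.

Lemma staircase_indic (f : T -> R) x :
  staircase h K (f x) = h * \sum_(j < K) \1_[set x | (j.+1)%:R * h <= f x] x.
Proof.
by congr (_ * _); apply: eq_bigr => j _; rewrite indicE mem_setE.
Qed.

Lemma measurable_staircase (f : T -> R) : measurable_fun setT f ->
  measurable_fun setT (fun x => staircase h K (f x)).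
Proof.
move=> mf; rewrite (funext (staircase_indic f)).
apply: measurable_funM; first exact: measurable_cst.
by apply: measurable_sum => j; exact/measurable_indic/measurable_ge_cst.
Qed.

Lemma integral_staircase (f : T -> R) : measurable_fun setT f ->
  (\int[P]_x (staircase h K (f x))%:E =
    (h * \sum_(j < K) fine (P [set x | (j.+1)%:R * h <= f x]))%:E)%E.
Proof.
move=> mf; have mlev (a : R) : measurable [set x | a <= f x].
  exact: measurable_ge_cst.
under eq_integral do rewrite staircase_indic mulr_sumr.
rewrite integral_sumr; last 2 first.
- move=> j; apply: measurable_funM; first exact: measurable_cst.
  exact: measurable_indic.
- by move=> j x; apply: mulr_ge0; [| rewrite indicE ler0n].
under eq_bigr => j _ do rewrite integral_indicZ //.
by rewrite sumEFin mulr_sumr.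
Qed.

Lemma integral_staircaseM (f1 f2 : T -> R) :
  measurable_fun setT f1 -> measurable_fun setT f2 ->
  (forall a b : R, P ([set x | a <= f1 x] `&` [set x | b <= f2 x]) =
     (P [set x | (a <= f1 x)%R] * P [set x | (b <= f2 x)%R])%E) ->
  (\int[P]_x (staircase h K (f1 x) * staircase h K (f2 x))%:E =
    ((h * \sum_(j < K) fine (P [set x | (j.+1)%:R * h <= f1 x])) *
     (h * \sum_(l < K) fine (P [set x | (l.+1)%:R * h <= f2 x])))%:E)%E.
Proof.
move=> mf1 mf2 indep.
pose A j := [set x | (j.+1)%:R * h <= f1 x].
pose B l := [set x | (l.+1)%:R * h <= f2 x].
have mAB j l : measurable (A j `&` B l).
  by apply: measurableI; exact: measurable_ge_cst.
have prodE x : staircase h K (f1 x) * staircase h K (f2 x) =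
    \sum_(j < K) \sum_(l < K) h * h * \1_(A j `&` B l) x.
  rewrite !staircase_indic mulrACA big_distrlr mulr_sumr; apply: eq_bigr => j _.
  by rewrite mulr_sumr; apply: eq_bigr => l _; rewrite indicI.
have hh_ge0 : 0 <= h * h by rewrite mulr_ge0.
have term_ge0 j l x : 0 <= h * h * \1_(A j `&` B l) x.
  by rewrite mulr_ge0 // indicE ler0n.
have mterm j l : measurable_fun setT (fun x => h * h * \1_(A j `&` B l) x).
  by apply: measurable_funM; [exact: measurable_cst | exact: measurable_indic].
under eq_integral do rewrite prodE.
rewrite integral_sumr; last 2 first.
- by move=> j; exact: measurable_sum.
- by move=> j x; exact: sumr_ge0.
under eq_bigr => j _ do rewrite integral_sumr //.
under eq_bigr => j _ do under eq_bigr => l _ do rewrite integral_indicZ //.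
have fine_indep a b : fine (P ([set x | a <= f1 x] `&` [set x | b <= f2 x])) =
    fine (P [set x | a <= f1 x]) * fine (P [set x | b <= f2 x]).
  by rewrite indep fineM // fin_num_measure //; exact: measurable_ge_cst.
rewrite /A /B; under eq_bigr => j _ do under eq_bigr => l _ do
  rewrite fine_indep.
under eq_bigr do rewrite sumEFin.
rewrite sumEFin mulrACA big_distrlr mulr_sumr; congr EFin.
by apply: eq_bigr => j _; rewrite mulr_sumr.
Qed.

Lemma integral_min_le_staircase (f : T -> R) :
  measurable_fun setT f -> (forall x, 0 <= f x) ->
  (\int[P]_x (Num.min (f x) (K%:R * h))%:E <=
    \int[P]_x (staircase h K (f x))%:E + h%:E)%E.
Proof.
move=> mf f0.
have -> : h%:E = (\int[P]_x (cst h%:E x))%E.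
  by rewrite integral_cst //= probability_setT mule1.
rewrite -ge0_integralD //; last 2 first.
- by move=> x _; rewrite lee_fin staircase_ge0.
- exact/measurable_EFinP/measurable_staircase.
apply: ge0_le_integral => //.
- by move=> x _; rewrite lee_fin le_min f0 mulr_ge0.
- apply/measurable_EFinP/measurable_minr => //; exact: measurable_cst.
- by apply: emeasurable_funD => //; exact/measurable_EFinP/measurable_staircase.
by move=> x _; rewrite -EFinD lee_fin min_le_staircase.
Qed.

End staircase_integrals.

Section second_moment.
Context d (T : measurableType d) (R : realType) (P : probability T R).

Lemma truncated_integral_ge (f : T -> R) (r : R) :
  measurable_fun setT f -> (forall x, 0 <= f x) ->
  (r%:E < \int[P]_x (f x)%:E)%E ->
  exists M : nat, (r%:E <= \int[P]_x (Num.min (f x) M%:R)%:E)%E.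
Proof.
move=> mf f0 rf.
pose g (M : nat) x := (Num.min (f x) M%:R)%:E.
have mg M : measurable_fun setT (g M).
  apply/measurable_EFinP/measurable_minr => //; exact: measurable_cst.
have g0 M x : setT x -> (0 <= g M x)%E.
  by move=> _; rewrite lee_fin le_min f0 ler0n.
have g_nd x : {homo g^~ x : M N / (M <= N)%N >-> (M <= N)%E}.
  by move=> M N MN; rewrite lee_fin le_min2 // ler_nat.
have g_cvg x : g^~ x @ \oo --> (f x)%:E.
  apply: cvg_near_cst; exists (Num.Def.trunc (f x)).+1 => // M /= fM.
  by rewrite /g min_l // ltW // (lt_le_trans (truncnS_gt _)) // ler_nat.
have int_nd :
    {homo (fun M => \int[P]_x g M x)%E : M N / (M <= N)%N >-> (M <= N)%E}.
  move=> M N MN; apply: ge0_le_integral => //; first exact: g0.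
  by move=> y _; exact: g_nd.
have := monotone_convergence P measurableT mg g0 (fun x _ => g_nd x).
under eq_integral => x _ do rewrite (cvg_lim _ (g_cvg x)) //.
move=> int_lim; rewrite int_lim in rf.
have [M _ HM] := lte_lim int_nd (ereal_nondecreasing_is_cvgn int_nd) rf.
by exists M; exact: (HM M (leqnn M)).
Qed.

Lemma in_D_sqr_integral_ge1 (X : {RV P >-> R}) : in_D 1 X \/ in_D 2 X ->
  (1 <= \int[P]_x (X x ^+ 2)%:E)%E.
Proof.
have mX : measurable_fun setT X by exact: measurable_funPT.
case=> -[_ [_ /andP[mom _]]]; last first.
  apply: (le_trans mom); rewrite le_eqVlt; apply/orP; left.
  by apply/eqP/eq_integral => x _; rewrite powR_mulrn // real_normK // num_real.
have mabs : measurable_fun setT (fun x => `|X x|) by exact: measurableT_comp.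
have two_le : (2%:E <= \int[P]_x (2 * `|X x|)%:E)%E.
  under eq_integral do rewrite EFinM.
  rewrite ge0_integralZl_EFin //; last exact/measurable_EFinP.
  under eq_integral do rewrite -[`|X _|]powRr1 //.
  by rewrite -[leLHS]mule1 lee_pmul2l.
have am_gm : (\int[P]_x (2 * `|X x|)%:E <= \int[P]_x (X x ^+ 2)%:E + 1)%E.
  have -> : 1%E = (\int[P]_x (cst 1%E x))%E.
    by rewrite integral_cst //= probability_setT mule1.
  rewrite -ge0_integralD //; last 2 first.
  - by move=> x _; rewrite lee_fin sqr_ge0.
  - exact/measurable_EFinP/measurable_funX.
  apply: ge0_le_integral => //.
  - exact/measurable_EFinP/measurable_funM.
  - by apply: emeasurable_funD => //; exact/measurable_EFinP/measurable_funX.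
  move=> x _; rewrite /= -EFinD lee_fin -(real_normK (num_real (X x))).
  by have := sqr_ge0 (`|X x| - 1); nra.
move: (le_trans two_le am_gm); case: (\int[P]_x _)%E => [r||] //=.
- by rewrite !lee_fin; lra.
- by move=> _; exact: leey.
Qed.

End second_moment.

Section bounded_uncorrelated_sums.
Context d (T : measurableType d) (R : realType) (P : probability T R).
Variables (g : nat -> T -> R) (H mu : R).
Hypothesis mg : forall i, measurable_fun setT (g i).
Hypothesis g_ge0 : forall i x, 0 <= g i x.
Hypothesis g_le : forall i x, g i x <= H.
Hypothesis integral_g : forall i, (\int[P]_x (g i x)%:E = mu%:E)%E.
Hypothesis integral_gM : forall i k, i != k ->
  (\int[P]_x (g i x * g k x)%:E <= (mu ^+ 2)%:E)%E.

Lemma integral_gM_le i k :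
  (\int[P]_x (g i x * g k x)%:E <= (mu ^+ 2 + (i == k)%:R * H ^+ 2)%:E)%E.
Proof.
have [<-|ik] := eqVneq i k; last by rewrite mul0r addr0 integral_gM.
apply: (@le_trans _ _ (\int[P]_x (cst (H ^+ 2)%:E x))%E).
  apply: ge0_le_integral => //.
  - by move=> x _; rewrite lee_fin mulr_ge0.
  - exact/measurable_EFinP/measurable_funM.
  - by move=> x _; rewrite lee_fin /= expr2 ler_pM.
by rewrite integral_cst //= probability_setT mule1 mul1r lee_fin lerDr sqr_ge0.
Qed.

Lemma integral_sum_sqr_le n :
  (\int[P]_x ((\sum_(i < n) g i x) ^+ 2)%:E <=
    (n%:R ^+ 2 * mu ^+ 2 + n%:R * H ^+ 2)%:E)%E.
Proof.
have gM_ge0 i k x : 0 <= g i x * g k x by exact: mulr_ge0.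
have mgM i k : measurable_fun setT (fun x => g i x * g k x).
  exact: measurable_funM.
under eq_integral do rewrite expr2 big_distrlr /=.
rewrite integral_sumr; last 2 first.
- by move=> i; apply: measurable_sum => k; exact: mgM.
- by move=> i x; apply: sumr_ge0 => k _; exact: gM_ge0.
under eq_bigr do rewrite integral_sumr //.
apply: (@le_trans _ _ (\sum_(i < n) \sum_(k < n)
    (mu ^+ 2 + (i == k)%:R * H ^+ 2)%:E)%E).
  by apply: lee_sum => i _; apply: lee_sum => k _; exact: integral_gM_le.
under eq_bigr => i _.
  rewrite sumEFin big_split /= sumr_const card_ord -mulr_suml.
  rewrite (bigD1 i) //= eqxx.
  rewrite big1 => [|k /negbTE ik]; last by rewrite eq_sym ik.
  over.
rewrite sumEFin sumr_const card_ord addr0 mul1r mulrnDl.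
by rewrite [n%:R ^+ 2]expr2 -mulrA !mulr_natl.
Qed.

Lemma integral_sum_dev_sqr_le n :
  (\int[P]_x ((\sum_(i < n) g i x - n%:R * mu) ^+ 2)%:E <=
    (n%:R * H ^+ 2)%:E)%E.
Proof.
have mS : measurable_fun setT (fun x => \sum_(i < n) g i x).
  exact: measurable_sum.
have S_ge0 x : 0 <= \sum_(i < n) g i x by exact: sumr_ge0.
have intS : (\int[P]_x (\sum_(i < n) g i x)%:E = (n%:R * mu)%:E)%E.
  rewrite integral_sumr //; under eq_bigr do rewrite integral_g.
  by rewrite sumEFin sumr_const card_ord mulr_natl.
rewrite -(@leeD2rE _ ((n%:R * mu) ^+ 2)%:E) // integral_sqr_centered //.
apply: (le_trans (integral_sum_sqr_le n)).
by rewrite -EFinD exprMn addrC.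
Qed.

Lemma measure_sum_lt_half_le n : 1 / 2 < mu -> (0 < n)%N ->
  fine (P [set x | \sum_(i < n) g i x < n%:R / 2]) <=
    H ^+ 2 / (mu - 1 / 2) ^+ 2 / n%:R.
Proof.
move=> mu_gt n_gt0; have n_pos : 0 < n%:R :> R by rewrite ltr0n.
have mS : measurable_fun setT (fun x => \sum_(i < n) g i x).
  exact: measurable_sum.
have half_le : n%:R / 2 <= n%:R * mu :> R by rewrite ler_pM2l //; lra.
have tail := le_trans (sqr_mul_measure_lt_le P mS half_le)
  (integral_sum_dev_sqr_le n).
rewrite -(fineK (fin_num_measure P _ (measurable_lt_cst _ mS))) in tail.
set p := fine _ in tail *; rewrite -EFinM lee_fin in tail.
rewrite (_ : (n%:R * mu - n%:R / 2) ^+ 2 = n%:R * (n%:R * (mu - 1 / 2) ^+ 2))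
  in tail; last by ring.
rewrite -mulrA ler_pM2l // in tail.
by rewrite !ler_pdivlMr ?exprn_gt0 ?subr_gt0 // [p * _]mulrC mulrAC.
Qed.

End bounded_uncorrelated_sums.

Lemma mutually_independent_pair d (T : measurableType d) (R : realType)
    (P : probability T R) (w : nat -> {RV P >-> R}) i k (B1 B2 : set R) :
  mutually_independent w -> i != k -> measurable B1 -> measurable B2 ->
  P (w i @^-1` B1 `&` w k @^-1` B2) = (P (w i @^-1` B1) * P (w k @^-1` B2))%E.
Proof.
move=> indep ik mB1 mB2; pose B m := if m == i then B1 else B2.
have mB m : measurable (B m) by rewrite /B; case: ifP.
have uik : uniq [:: i; k] by rewrite /= inE ik.
move: (indep _ B uik mB).
rewrite bigcap_seq !big_cons !big_nil setIT mule1 /B eqxx eq_sym (negbTE ik).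
by move=> <-.
Qed.

Section iid_squares.
Context d (T : measurableType d) (R : realType) (P : probability T R).
Variable w : nat -> {RV P >-> R}.
Hypothesis w_indep : mutually_independent w.
Hypothesis w_id : identically_distributed w.
Variables (h : R) (K : nat).
Hypothesis h_gt0 : 0 < h.

Let mw2 i : measurable_fun setT (fun x => w i x ^+ 2).
Proof. exact/measurable_funX/measurable_funPT. Qed.

Let measurable_sqr_ge (a : R) : measurable [set y : R | a <= y ^+ 2].
Proof.
have msqr : measurable_fun setT (fun y : R => y ^+ 2).
  by apply: measurable_funX; exact: measurable_id.
exact: measurable_ge_cst msqr.
Qed.

Let level_id i a : P [set x | a <= w i x ^+ 2] = P [set x | a <= w 0 x ^+ 2].
Proof. exact: (w_id i (measurable_sqr_ge a)). Qed.

Let mu := h * \sum_(j < K) fine (P [set x | (j.+1)%:R * h <= w 0 x ^+ 2]).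

Lemma integral_staircase_sqr i :
  (\int[P]_x (staircase h K (w i x ^+ 2))%:E = mu%:E)%E.
Proof. by rewrite integral_staircase //; under eq_bigr do rewrite level_id. Qed.

Lemma integral_staircase_sqrM i k : i != k ->
  (\int[P]_x (staircase h K (w i x ^+ 2) * staircase h K (w k x ^+ 2))%:E =
    (mu ^+ 2)%:E)%E.
Proof.
move=> ik; rewrite integral_staircaseM // => [|a b]; last first.
  exact: mutually_independent_pair w_indep ik
    (measurable_sqr_ge a) (measurable_sqr_ge b).
rewrite expr2; congr (_ * _)%:E; congr (_ * _);
  by apply: eq_bigr => j _; rewrite level_id.
Qed.

Lemma measure_sum_sqr_ge n : 1 / 2 < mu -> (0 < n)%N ->
  1 - (h * K%:R) ^+ 2 / (mu - 1 / 2) ^+ 2 / n%:R <=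
    fine (P [set x | n%:R / 2 <= \sum_(i < n) w i x ^+ 2]).
Proof.
move=> mu_gt n_gt0.
pose g i x := staircase h K (w i x ^+ 2).
have mg i : measurable_fun setT (g i) by exact: measurable_staircase.
have g_ge0 i x : 0 <= g i x by exact: staircase_ge0.
have g_le i x : g i x <= h * K%:R by exact: staircase_le_bound.
have gM i k : i != k ->
    (\int[P]_x (g i x * g k x)%:E <= (mu ^+ 2)%:E)%E.
  by move=> ik; rewrite integral_staircase_sqrM.
have tail := measure_sum_lt_half_le mg g_ge0 g_le integral_staircase_sqr gM
  mu_gt n_gt0.
apply: le_trans (lerB (lexx 1) tail) _.
have mE : measurable [set x | \sum_(i < n) g i x < n%:R / 2].
  exact/measurable_lt_cst/measurable_sum.
have mG : measurable [set x | n%:R / 2 <= \sum_(i < n) w i x ^+ 2].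
  exact/measurable_ge_cst/measurable_sum.
rewrite -lee_fin EFinB !fineK ?fin_num_measure // -probability_setC //.
apply: le_measure; rewrite ?inE //; first exact: measurableC.
move=> x /= /negP; rewrite -leNgt => /le_trans; apply; apply: ler_sum => i _.
exact/staircase_le/sqr_ge0.
Qed.

End iid_squares.

Lemma cvg_one_of_lower_bound (R : realType) (u : nat -> R) (C : R) :
  (forall n, (0 < n)%N -> 1 - C / n%:R <= u n <= 1) -> u @ \oo --> (1 : R).
Proof.
move=> u_bnd; rewrite -cvg_shiftS.
apply: (@squeeze_cvgr _ _ _ _ (fun n => 1 - C * harmonic n) (fun=> 1)).
- by apply: nearW => n; exact: u_bnd.
- rewrite -[X in _ --> X]subr0 -[X in _ - X](mulr0 C).
  apply: cvgB; first exact: cvg_cst.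
  by apply: cvgMl_tmp; exact: cvg_harmonic.
- exact: cvg_cst.
Qed.

Theorem lemmaA9 (d : measure_display) (T : measurableType d) (R : realType)
    (P : probability T R) (w : nat -> {RV P >-> R}) :
  mutually_independent w -> identically_distributed w ->
  (in_D 1 (w 0) \/ in_D 2 (w 0)) ->
  (fun n : nat => fine (P [set x | n%:R / 2 <= \sum_(i < n) (w i x) ^+ 2]))
    @ \oo --> (1 : R).
Proof.
move=> w_indep w_id w0_D.
have mw02 : measurable_fun setT (fun x => w 0 x ^+ 2).
  exact/measurable_funX/measurable_funPT.
have [M trunc] : exists M : nat,
    ((3 / 4)%:E <= \int[P]_x (Num.min (w 0 x ^+ 2) M%:R)%:E)%E.
  apply: truncated_integral_ge => // [x|]; first exact: sqr_ge0.
  by apply: lt_le_trans (in_D_sqr_integral_ge1 w0_D); rewrite lte_fin; lra.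
pose h : R := 1 / 8; pose K := (8 * M)%N.
have h_gt0 : 0 < h by rewrite /h; lra.
pose mu := h * \sum_(j < K) fine (P [set x | (j.+1)%:R * h <= w 0 x ^+ 2]).
have mu_gt : 1 / 2 < mu.
  have := integral_min_le_staircase P K h_gt0 mw02 (fun x => sqr_ge0 _).
  have -> : K%:R * h = M%:R by rewrite /K natrM /h; lra.
  rewrite integral_staircase // => /(le_trans trunc).
  by rewrite /mu -EFinD lee_fin /h; lra.
apply: (cvg_one_of_lower_bound (C := (h * K%:R) ^+ 2 / (mu - 1 / 2) ^+ 2)).
move=> n n_gt0; apply/andP; split.
  exact: (measure_sum_sqr_ge w_indep w_id h_gt0 mu_gt n_gt0).
have mG : measurable [set x | n%:R / 2 <= \sum_(i < n) w i x ^+ 2].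
  apply/measurable_ge_cst/measurable_sum => i.
  exact/measurable_funX/measurable_funPT.
by rewrite -lee_fin fineK ?probability_le1 ?fin_num_measure.
Qed.
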